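(* Let $X$ be a set, let $R_1,R_2$ be binary relations on $X$, and let $x\in X$. Assume that (1) $R_2$ is well-founded, and (2) there exist a set $B_1\subseteq X$, a well-founded relation $R_1'$ on $X$ and a transitive relation $E_1$ on $X$ such that: (2.i) $x\in B_1$, and for all $a,b\in X$, if $a\in B_1$ and $a \xrightarrow{R_1\cup R_2} b$ then $b\in B_1$; (2.ii) for all $a,b$, if $a\in B_1$ and $a\xrightarrow{R_1} b$ then $a\xrightarrow{R_1'} b$; (2.iii) for all $a,b,c$, if $a\xrightarrow{R_1'} b$ and $b\xrightarrow{E_1} c$ then $a\xrightarrow{R_1'} c$; (2.iv) for all $a,b$, if $a\xrightarrow{R_2} b$ then $a\xrightarrow{E_1} b$. Then $\mathsf{Acc}(R_1\cup R_2, x)$ holds.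
   Context: For a relation $R$ on $X$ write $a\xrightarrow{R} b$ for $(a,b)\in R$. $R$ is called well-founded if every element is accessible, i.e. there is no infinite sequence $x_0,x_1,x_2,\dots$ with $x_i\xrightarrow{R}x_{i+1}$ for all $i$. $\mathsf{Acc}(R,x)$ (''$x$ is accessible for $R$'') means that every sequence $x=x_0\xrightarrow{R}x_1\xrightarrow{R}\cdots$ starting from $x$ is finite (constructively: the inductive predicate stating that all $R$-successors of $x$ are accessible). *)

From Stdlib Require Import Relations.

(* Paper convention: [R a b] means a -R-> b. Accessibility follows R forward:
   x is accessible iff all R-successors of x are accessible.  Stdlib's [Acc]
   follows predecessors, so we use the transposed relation. *)
Definition AccP {X : Type} (R : X -> X -> Prop) (x : X) : Prop :=
  Acc (fun b a => R a b) x.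

Definition WF {X : Type} (R : X -> X -> Prop) : Prop := forall x, AccP R x.

Definition relU {X : Type} (R1 R2 : X -> X -> Prop) : X -> X -> Prop :=
  fun a b => R1 a b \/ R2 a b.

Definition transitive_rel {X : Type} (E : X -> X -> Prop) : Prop :=
  forall a b c, E a b -> E b c -> E a c.


(* Lexicographic induction: an R1-step out of [y] lands R1'-below [y], and the
   condition "R1'-below [p]" survives any number of R2-steps (by 2.iii and 2.iv),
   so accessibility follows by induction on R1' outside and R2 inside. *)

Section AccUnion.

Variables (X : Type) (R1 R2 R1' : X -> X -> Prop) (B : X -> Prop).

Hypothesis R2_wf : WF R2.
Hypothesis B_closed : forall a b, B a -> relU R1 R2 a b -> B b.
Hypothesis R1_sub_R1' : forall a b, B a -> R1 a b -> R1' a b.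
Hypothesis R1'_R2_step : forall a b c, R1' a b -> R2 b c -> R1' a c.

Lemma acc_union_R1'_succ (p : X) :
  AccP R1' p -> forall y, B y -> R1' p y -> AccP (relU R1 R2) y.
Proof.
  induction 1 as [p _ IHp]; intros y By.
  induction (R2_wf y) as [y _ IHy]; intros Hpy.
  constructor; intros z Hyz.
  assert (Bz : B z) by exact (B_closed y z By Hyz).
  destruct Hyz as [Hyz | Hyz].
  - exact (IHp y Hpy z Bz (R1_sub_R1' y z By Hyz)).
  - exact (IHy z Hyz Bz (R1'_R2_step p y z Hpy Hyz)).
Qed.

Lemma acc_union_of_closed (R1'_wf : WF R1') (x : X) :
  B x -> AccP (relU R1 R2) x.
Proof.
  induction (R2_wf x) as [y _ IHy]; intros By.
  constructor; intros z Hyz.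
  assert (Bz : B z) by exact (B_closed y z By Hyz).
  destruct Hyz as [Hyz | Hyz].
  - exact (acc_union_R1'_succ y (R1'_wf y) z Bz (R1_sub_R1' y z By Hyz)).
  - exact (IHy z Hyz Bz).
Qed.

End AccUnion.

Theorem proposition1 (X : Type) (R1 R2 : X -> X -> Prop) (x : X) :
  WF R2 ->
  (exists (B1 : X -> Prop) (R1' E1 : X -> X -> Prop),
      WF R1' /\ transitive_rel E1 /\
      (B1 x /\ (forall a b, B1 a -> relU R1 R2 a b -> B1 b)) /\
      (forall a b, B1 a -> R1 a b -> R1' a b) /\
      (forall a b c, R1' a b -> E1 b c -> R1' a c) /\
      (forall a b, R2 a b -> E1 a b)) ->
  AccP (relU R1 R2) x.
Proof.
  intros R2_wf [B1 [R1' [E1 [R1'_wf [_ [[Bx B_closed] [R1_sub [R1'_E1 R2_E1]]]]]]]].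
  apply (acc_union_of_closed X R1 R2 R1' B1); auto.
  intros a b c Hab Hbc; exact (R1'_E1 a b c Hab (R2_E1 b c Hbc)).
Qed.
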